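(* Let $n,k\ge1$ and let $\bar x,\bar y\in\mathbb{Z}/2^{n+k-1}\mathbb{Z}$. There is an arrow (of either colour) from $\overline{H}_{M_k}(\bar x)$ to $\overline{H}_{M_k}(\bar y)$ in $\Gamma_{2^n}$ if and only if there exist $\bar a\in[\bar x]$ and $\bar b\in[\bar y]$ with an arrow $\bar a\to\bar b$ in $\Gamma_{2^{n+k-1}}$. Moreover, in that case the arrows of $\Gamma_{2^{n+k-1}}$ from elements of $[\bar x]$ to elements of $[\bar y]$ define a bijection $[\bar x]\to[\bar y]$ (each element of $[\bar x]$ has exactly one such outgoing arrow and each element of $[\bar y]$ exactly one such incoming arrow).
   Context: $T(x)=x/2$ for $x$ even, $T(x)=(3x+1)/2$ for $x$ odd, extended to $\mathbb{Z}_2$; $T_0(x)=x/2$, $T_1(x)=(3x+1)/2$. $\Gamma_d$ is the directed graph on $\mathbb{Z}/d\mathbb{Z}$ with a black arrow $r\to s$ iff there exist positive integers $x\equiv r$, $y\equiv s\pmod d$ with $x$ even and $T_0(x)=y$, and a red arrow $r\to s$ iff there exist such $x,y$ with $x$ odd and $T_1(x)=y$. The parity vector map $\Phi^{-1}:\mathbb{Z}_2\to\mathbb{Z}_2$ is $\Phi^{-1}(x)=\sum_{i\ge0}(T^i(x)\bmod 2)2^i$; it is a bijection with inverse $\Phi$. For $k\ge1$, $M_k(\sum_i a_i2^i)=\sum_i m_i2^i$ with $m_i\equiv a_i+\cdots+a_{i+k-1}\pmod2$, and $H_{M_k}=\Phi\circ M_k\circ\Phi^{-1}$, which commutes with $T$.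 The residue of $H_{M_k}(x)$ mod $2^n$ depends only on $x$ mod $2^{n+k-1}$; $\overline{H}_{M_k}:\mathbb{Z}/2^{n+k-1}\mathbb{Z}\to\mathbb{Z}/2^n\mathbb{Z}$ is the induced map, and $[\bar x]=\overline{H}_{M_k}^{-1}(\{\overline{H}_{M_k}(\bar x)\})$. *)

From mathcomp Require Import all_boot.
From Stdlib Require Import ClassicalEpsilon.
Set Implicit Arguments. Unset Strict Implicit. Unset Printing Implicit Defensive.

(* 2-adic integers represented by their binary digit streams:
   x = sum_i (x i) 2^i. *)
Definition Z2 := nat -> bool.

Fixpoint trunc (x : Z2) (m : nat) : nat :=
  if m is m'.+1 then trunc x m' + x m' * 2 ^ m' else 0.

Definition of_nat (r : nat) : Z2 := fun i => odd (r %/ 2 ^ i).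

Definition Tnat (x : nat) : nat := if odd x then (3 * x + 1)./2 else x./2.

(* Its (unique continuous) extension to Z_2: T(x) mod 2^(i+1) only depends
   on x mod 2^(i+2), so bit i of T(x) is bit i of Tnat (x mod 2^(i+2)). *)
Definition T (x : Z2) : Z2 := fun i => odd (Tnat (trunc x i.+2) %/ 2 ^ i).

Definition PhiInv (x : Z2) : Z2 := fun i => iter i T x 0.

(* Phi = inverse of Phi^{-1} (a bijection of Z_2) *)
Definition Phi (v : Z2) : Z2 :=
  epsilon (inhabits (fun _ : nat => false)) (fun x : Z2 => PhiInv x = v).

Definition Mk (k : nat) (a : Z2) : Z2 :=
  fun i => odd (\sum_(j < k) nat_of_bool (a (i + j))).

Definition HM (k : nat) (x : Z2) : Z2 := Phi (Mk k (PhiInv x)).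

(* induced map Z/2^(n+k-1) -> Z/2^n (residues represented by naturals < modulus) *)
Definition HMbar (n k r : nat) : nat := trunc (HM k (of_nat r)) n.

Definition inClass (n k x a : nat) : Prop :=
  a < 2 ^ (n + k - 1) /\ HMbar n k a = HMbar n k x.

Definition black_arrow (d r s : nat) : Prop :=
  exists x y : nat, [/\ 0 < x, 0 < y, x %% d = r, y %% d = s
                      & ~~ odd x /\ x./2 = y].
Definition red_arrow (d r s : nat) : Prop :=
  exists x y : nat, [/\ 0 < x, 0 < y, x %% d = r, y %% d = s
                      & odd x /\ (3 * x + 1)./2 = y].
Definition arrow (d r s : nat) : Prop := black_arrow d r s \/ red_arrow d r s.

From mathcomp Require Import all_boot zify.
From Stdlib Require Import ClassicalEpsilon FunctionalExtensionality.

(* The proof works with parity vectors.  Write parity a for the bit stream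
   i |-> (T^i a mod 2) of a natural number a.

   1. Terras' theorem: T^i (s + 2^m c) = T^i s + 2^(m-i) c' with c' of the
      parity of c, hence a |-> (parity a i)_(i<m) is a bijection from
      [0, 2^m) onto the words of length m.  Consequently (arrow_pow2) there is
      an arrow r -> s in Gamma_(2^m) iff the parity word of s is the parity
      word of r shifted by one letter (the last letter of s being free).
   2. On 2-adic digit streams, PhiInv x agrees with parity (x mod 2^m) below
      m; so Phi is a right inverse of PhiInv and the parity word of
      HMbar n k a is the word of sliding parities Mk k (parity a) below n.
   3. Pure combinatorics of words of length N = n + k (window length k + 1):
      shifting a word shifts its window parities, and the one free letter of
      a shift is pinned down by one window parity (the last window for a
      forward shift, the first one for a backward shift).
   The theorem follows: the classes [x], [y] are the words with prescribed
   windows below n, and arrows between them are shifts. *)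

Definition parity (a i : nat) : bool := odd (iter i Tnat a).

Lemma parity_Tnat a i : parity (Tnat a) i = parity a i.+1.
Proof. by rewrite /parity iterSr. Qed.

Lemma Tnat_perturb s j c :
  exists c', Tnat (s + 2 ^ j.+1 * c) = Tnat s + 2 ^ j * c' /\ odd c' = odd c.
Proof.
rewrite expnS -mulnA; set X := 2 ^ j * c.
rewrite /Tnat oddD oddM /= addbF.
case: (odd s).
- by exists (3 * c); split; [rewrite /X; lia | rewrite oddM].
- by exists c; split; [rewrite /X; lia |].
Qed.

Lemma iter_Tnat_perturb i j s c : i <= j ->
  exists c', iter i Tnat (s + 2 ^ j * c) = iter i Tnat s + 2 ^ (j - i) * c'
             /\ odd c' = odd c.
Proof.
elim: i => [|i IH] le_ij; first by exists c; rewrite subn0.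
have [c' [E odd_c']] := IH (ltnW le_ij).
have [c'' [E' odd_c'']] := Tnat_perturb (iter i Tnat s) (j - i.+1) c'.
exists c''; split; last by rewrite odd_c'' odd_c'.
rewrite !iterS E.
have -> : j - i = (j - i.+1).+1 by lia.
by rewrite E'.
Qed.

Lemma parity_perturb_low s c m i : i < m -> parity (s + 2 ^ m * c) i = parity s i.
Proof.
move=> lt_im; have [c' [E _]] := @iter_Tnat_perturb i m s c (ltnW lt_im).
by rewrite /parity E oddD oddM oddX subn_eq0 leqNgt lt_im /= addbF.
Qed.

Lemma parity_perturb_top s c m : parity (s + 2 ^ m * c) m = parity s m (+) odd c.
Proof.
have [c' [E odd_c']] := @iter_Tnat_perturb m m s c (leqnn m).
by rewrite /parity E subnn expn0 mul1n oddD odd_c'.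
Qed.

Lemma parity_mod m r s i : r = s %[mod 2 ^ m] -> i < m -> parity r i = parity s i.
Proof.
move=> E lt_im.
rewrite (divn_eq r (2 ^ m)) (divn_eq s (2 ^ m)) E ![_ * _ + _]addnC ![_ * 2 ^ m]mulnC.
by rewrite !parity_perturb_low.
Qed.

Lemma parity_inj m r s : r < 2 ^ m -> s < 2 ^ m ->
  (forall i, i < m -> parity r i = parity s i) -> r = s.
Proof.
elim: m r s => [|m IH] r s; first by rewrite expn0; lia.
move=> lt_r lt_s par_rs; have pos_m : 0 < 2 ^ m by rewrite expn_gt0.
have low : r %% 2 ^ m = s %% 2 ^ m.
  apply: IH; rewrite ?ltn_pmod // => i lt_im.
  rewrite (@parity_mod m (r %% 2 ^ m) r) ?(@parity_mod m (s %% 2 ^ m) s) ?modn_mod //.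
  by apply: par_rs; lia.
have high : odd (r %/ 2 ^ m) = odd (s %/ 2 ^ m).
  apply: (@addbI (parity (r %% 2 ^ m) m)).
  rewrite {2}low -!parity_perturb_top ![2 ^ m * _]mulnC ![_ %% _ + _]addnC.
  by rewrite -!divn_eq par_rs.
have lt_r2 : r %/ 2 ^ m < 2 by rewrite ltn_divLR // -expnS.
have lt_s2 : s %/ 2 ^ m < 2 by rewrite ltn_divLR // -expnS.
rewrite (divn_eq r (2 ^ m)) (divn_eq s (2 ^ m)) low; congr (_ * _ + _).
by move: high lt_r2 lt_s2; case: (r %/ 2 ^ m) => [|[|]]; case: (s %/ 2 ^ m) => [|[|]].
Qed.

Lemma parity_surj m (w : nat -> bool) :
  exists r, r < 2 ^ m /\ forall i, i < m -> parity r i = w i.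
Proof.
elim: m => [|m [r [lt_r par_r]]]; first by exists 0.
have pos_m : 0 < 2 ^ m by rewrite expn_gt0.
pose c := parity r m (+) w m.
exists (r + 2 ^ m * c); split; first by rewrite expnS /c; case: (_ (+) _); lia.
move=> i; rewrite ltnS leq_eqVlt => /predU1P [->|lt_im].
- by rewrite parity_perturb_top /c oddb addKb.
- by rewrite parity_perturb_low // par_r.
Qed.

Lemma arrowE d r s : arrow d r s <->
  exists x, [/\ 0 < x, 0 < Tnat x, x %% d = r & Tnat x %% d = s].
Proof.
split.
- case=> [[x [y [x_gt0 y_gt0 xr ys [x_even Ex]]]] | [x [y [x_gt0 y_gt0 xr ys [x_odd Ex]]]]];
    exists x; rewrite /Tnat ?(negbTE x_even) ?x_odd Ex //.
- case=> x [x_gt0 Tx_gt0 xr Txs]; rewrite /Tnat in Tx_gt0 Txs.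
  case: (boolP (odd x)) => x_odd in Tx_gt0 Txs.
  + by right; exists x, ((3 * x + 1)./2).
  + by left; exists x, x./2.
Qed.

Definition shifted (N : nat) (u v : nat -> bool) : Prop :=
  forall i, i.+1 < N -> v i = u i.+1.

Lemma arrow_pow2 m r s : 0 < m ->
  arrow (2 ^ m) r s <-> [/\ r < 2 ^ m, s < 2 ^ m & shifted m (parity r) (parity s)].
Proof.
move=> m_gt0; have pos_m : 0 < 2 ^ m by rewrite expn_gt0.
rewrite arrowE; split.
- case=> x [_ _ <- <-]; split; rewrite ?ltn_pmod // => i lt_im.
  rewrite (@parity_mod m _ (Tnat x) i) ?(@parity_mod m _ x i.+1) ?modn_mod //; last by lia.
  exact: parity_Tnat.
- case=> lt_r lt_s shift_rs.
  (* Lift r to x = r + 2^m t with t in {1, 2} chosen so that the letter m of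
     parity x, i.e. the letter m - 1 of parity (T x), is the one of s. *)
  pose b := parity r m (+) parity s m.-1; pose x := r + 2 ^ m * (~~ b).+1.
  have x_ge2 : 2 <= x.
    have : 2 <= 2 ^ m by rewrite -{1}(expn1 2) leq_exp2l.
    by rewrite /x; case: (~~ b); lia.
  exists x; split; first by lia.
  + by rewrite /Tnat; case: (odd x); lia.
  + by rewrite /x addnC mulnC modnMDl modn_small.
  + apply: (@parity_inj m); rewrite ?ltn_pmod // => i lt_im.
    rewrite (@parity_mod m _ (Tnat x) i) ?modn_mod // parity_Tnat /x.
    have [lt_i1m | ge_i1m] := ltnP i.+1 m; first by rewrite parity_perturb_low // shift_rs.
    have -> : i = m.-1 by lia.
    by rewrite prednK // parity_perturb_top oddS oddb negbK /b addKb.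
Qed.

Lemma trunc_lt x m : trunc x m < 2 ^ m.
Proof. by elim: m => [|m IH] //=; rewrite expnS; case: (x m); lia. Qed.

Lemma trunc_ext x x' m : (forall i, i < m -> x i = x' i) -> trunc x m = trunc x' m.
Proof.
elim: m => [|m IH] //= eq_xx'.
by rewrite IH ?eq_xx' // => i lt_im; apply: eq_xx'; lia.
Qed.

Lemma trunc_mod x m j : j <= m -> trunc x m %% 2 ^ j = trunc x j.
Proof.
elim: m => [|m IH] le_jm; first by move: le_jm; rewrite leqn0 => /eqP ->.
case: (ltnP j m.+1) => [lt_jm | ge_jm]; last first.
  have -> : j = m.+1 by lia.
  by rewrite modn_small // trunc_lt.
rewrite /= (_ : 2 ^ m = 2 ^ (m - j) * 2 ^ j); last by rewrite -expnD subnK //; lia.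
by rewrite mulnA addnC modnMDl IH //; lia.
Qed.

Lemma digit_trunc x i : nat_of_bool (x i) = trunc x i.+1 %/ 2 ^ i.
Proof. by rewrite /= addnC divnMDl ?expn_gt0 // divn_small ?trunc_lt // addn0. Qed.

Lemma modn_pow2S a m : a %% 2 ^ m.+1 = a %% 2 ^ m + odd (a %/ 2 ^ m) * 2 ^ m.
Proof.
have pos_m : 0 < 2 ^ m by rewrite expn_gt0.
set q := a %/ 2 ^ m; set r := a %% 2 ^ m.
have lt_r : r < 2 ^ m by rewrite ltn_pmod.
have E : a = q./2 * 2 ^ m.+1 + (odd q * 2 ^ m + r).
  by rewrite expnS {1}(divn_eq a (2 ^ m)) -/q -/r; have := odd_double_half q; lia.
rewrite {1}E modnMDl modn_small; first by rewrite addnC.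
by rewrite expnS; case: (odd q); lia.
Qed.

Lemma trunc_of_nat a m : trunc (of_nat a) m = a %% 2 ^ m.
Proof. by elim: m => [|m IH] /=; rewrite ?modn1 // IH modn_pow2S. Qed.

Lemma odd_div_mod a b i : a = b %[mod 2 ^ i.+1] -> odd (a %/ 2 ^ i) = odd (b %/ 2 ^ i).
Proof.
move=> E; have := digit_trunc (of_nat a) i.
rewrite trunc_of_nat E -trunc_of_nat -digit_trunc /of_nat.
by case: (odd (a %/ 2 ^ i)); case: (odd (b %/ 2 ^ i)).
Qed.

Lemma Tnat_mod a b m : a = b %[mod 2 ^ m.+1] -> Tnat a = Tnat b %[mod 2 ^ m].
Proof.
move=> E.
have [ca [Ea _]] := Tnat_perturb (a %% 2 ^ m.+1) m (a %/ 2 ^ m.+1).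
have [cb [Eb _]] := Tnat_perturb (b %% 2 ^ m.+1) m (b %/ 2 ^ m.+1).
rewrite (divn_eq a (2 ^ m.+1)) (divn_eq b (2 ^ m.+1)) ![_ * 2 ^ m.+1]mulnC ![_ * _ + _]addnC.
by rewrite Ea Eb E ![_ + 2 ^ m * _]addnC ![2 ^ m * _]mulnC !modnMDl.
Qed.

Lemma trunc_T y m : trunc (T y) m = Tnat (trunc y m.+1) %% 2 ^ m.
Proof.
rewrite -trunc_of_nat; apply: trunc_ext => i lt_im.
by apply: odd_div_mod; apply: Tnat_mod; rewrite !trunc_mod //; lia.
Qed.

Lemma trunc_iter_T i m x : trunc (iter i T x) m = iter i Tnat (trunc x (i + m)) %% 2 ^ m.
Proof.
elim: i m => [|i IH] m /=; first by rewrite modn_small // trunc_lt.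
by rewrite trunc_T IH; apply: Tnat_mod; rewrite modn_mod addnS.
Qed.

Lemma PhiInv_parity x m i : i < m -> PhiInv x i = parity (trunc x m) i.
Proof.
move=> lt_im; rewrite (@parity_mod i.+1 (trunc x m) (trunc x i.+1)) ?trunc_mod //.
have := congr1 odd (trunc_iter_T i 1 x).
by rewrite expn1 modn2 addn1 /= expn0 muln1 add0n !oddb.
Qed.

Lemma PhiInv_of_nat a : PhiInv (of_nat a) = parity a.
Proof.
apply: functional_extensionality => i.
by rewrite (@PhiInv_parity _ i.+1) // trunc_of_nat (@parity_mod i.+1 _ a) ?modn_mod.
Qed.

Lemma PhiInv_surj (v : Z2) : exists x, PhiInv x = v.
Proof.
have code m : {r | r < 2 ^ m /\ forall i, i < m -> parity r i = v i}.
  exact: constructive_indefinite_description (parity_surj m v).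
pose x : Z2 := fun i => odd (sval (code i.+1) %/ 2 ^ i).
have trunc_x m : trunc x m = sval (code m).
  elim: m => [|m IH]; first by case: (code 0) => r [lt_r _] /=; lia.
  rewrite /= IH /x; case: (code m.+1) => r [lt_r par_r]; case: (code m) => r' [lt_r' par_r'] /=.
  rewrite -[RHS](modn_small lt_r) modn_pow2S; congr (_ + _).
  apply: (@parity_inj m); rewrite ?ltn_pmod ?expn_gt0 // => i lt_im.
  by rewrite (@parity_mod m (r %% 2 ^ m) r i) ?modn_mod // par_r ?par_r' //; lia.
exists x; apply: functional_extensionality => i.
rewrite (@PhiInv_parity _ i.+1) // trunc_x.
exact: (proj2 (svalP (code i.+1)) i (ltnSn i)).
Qed.

Lemma PhiInv_Phi v : PhiInv (Phi v) = v.
Proof. exact: (epsilon_spec _ (fun x => PhiInv x = v) (PhiInv_surj v)). Qed.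

Lemma parity_HMbar n k a i : i < n -> parity (HMbar n k a) i = Mk k (parity a) i.
Proof. by move=> lt_in; rewrite /HMbar -PhiInv_parity // /HM PhiInv_of_nat PhiInv_Phi. Qed.

Lemma Mk_recr k u i : Mk k.+1 u i = Mk k u i (+) u (i + k).
Proof. by rewrite /Mk big_ord_recr /= oddD oddb. Qed.

Lemma Mk_recl k u i : Mk k.+1 u i = u i (+) Mk k u i.+1.
Proof.
rewrite /Mk big_ord_recl /= addn0 oddD oddb; congr (_ (+) odd _).
by apply: eq_bigr => j _; rewrite /bump add1n addnS.
Qed.

Lemma Mk_shift {N k} {u v : nat -> bool} {i} :
  shifted N u v -> i + k < N -> Mk k v i = Mk k u i.+1.
Proof.
move=> shift_uv lt_ikN; rewrite /Mk; congr odd; apply: eq_bigr => j _.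
by rewrite shift_uv ?addSn //; have := ltn_ord j; lia.
Qed.

Lemma HMbar_eq n k a b :
  HMbar n k a = HMbar n k b <-> forall i, i < n -> Mk k (parity a) i = Mk k (parity b) i.
Proof.
split=> [E i lt_in | eq_ab]; first by rewrite -!(@parity_HMbar n) // E.
by apply: (@parity_inj n); rewrite ?trunc_lt // => i lt_in; rewrite !parity_HMbar ?eq_ab.
Qed.

Lemma arrow_HMbar n k x y : 0 < n ->
  arrow (2 ^ n) (HMbar n k x) (HMbar n k y) <->
  shifted n (Mk k (parity x)) (Mk k (parity y)).
Proof.
move=> n_gt0; rewrite arrow_pow2 //; split.
- by case=> _ _ shift_xy i lt_i1n; rewrite -!(@parity_HMbar n) ?shift_xy //; lia.
- move=> shift_xy; split; rewrite ?trunc_lt // => i lt_i1n.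
  by rewrite !parity_HMbar ?shift_xy //; lia.
Qed.

(* From now on the window length is k + 1 and the words have length
   N = n + k = n + (k + 1) - 1. *)
Section WindowShifts.

Variables n k : nat.
Hypothesis n_gt0 : 0 < n.
Local Notation N := (n + k).

Lemma inClassE x a : inClass n k.+1 x a <->
  a < 2 ^ N /\ forall i, i < n -> Mk k.+1 (parity a) i = Mk k.+1 (parity x) i.
Proof. by rewrite /inClass addnS subn1 HMbar_eq. Qed.

Lemma arrowN a b :
  arrow (2 ^ N) a b <-> [/\ a < 2 ^ N, b < 2 ^ N & shifted N (parity a) (parity b)].
Proof. by apply: arrow_pow2; lia. Qed.

Lemma shift_unique_fwd {a b b'} : b < 2 ^ N -> b' < 2 ^ N ->
  shifted N (parity a) (parity b) -> shifted N (parity a) (parity b') ->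
  Mk k.+1 (parity b) n.-1 = Mk k.+1 (parity b') n.-1 -> b = b'.
Proof.
move=> lt_b lt_b' shift_ab shift_ab' last_bb'.
apply: (@parity_inj N) => // i lt_iN.
have [lt_i1N | ge_i1N] := ltnP i.+1 N; first by rewrite shift_ab // shift_ab'.
move: last_bb'; rewrite !Mk_recr (Mk_shift shift_ab) ?(Mk_shift shift_ab'); try lia.
have -> : n.-1 + k = i by lia.
exact: addbI.
Qed.

Lemma shift_unique_bwd {a a' b} : a < 2 ^ N -> a' < 2 ^ N ->
  shifted N (parity a) (parity b) -> shifted N (parity a') (parity b) ->
  Mk k.+1 (parity a) 0 = Mk k.+1 (parity a') 0 -> a = a'.
Proof.
move=> lt_a lt_a' shift_ab shift_a'b first_aa'.
apply: (@parity_inj N) => // -[_ | i lt_iN]; last by rewrite -shift_ab // shift_a'b.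
by move: first_aa'; rewrite !Mk_recl -(Mk_shift shift_ab) ?(Mk_shift shift_a'b) => [/addIb||]; lia.
Qed.

Lemma shift_exists_fwd a t : exists b,
  [/\ b < 2 ^ N, shifted N (parity a) (parity b) & Mk k.+1 (parity b) n.-1 = t].
Proof.
pose w i := if i.+1 < N then parity a i.+1 else t (+) Mk k (parity a) n.
have [b [lt_b par_b]] := parity_surj N w.
have shift_ab : shifted N (parity a) (parity b).
  by move=> i lt_i1N; rewrite par_b /w ?lt_i1N //; lia.
exists b; split=> //.
rewrite Mk_recr (Mk_shift shift_ab) ?prednK // ?par_b /w; try lia.
by rewrite ifF ?addKb //; lia.
Qed.

Lemma shift_exists_bwd b t : exists a,
  [/\ a < 2 ^ N, shifted N (parity a) (parity b) & Mk k.+1 (parity a) 0 = t].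
Proof.
pose w i := if i is i'.+1 then parity b i' else t (+) Mk k (parity b) 0.
have [a [lt_a par_a]] := parity_surj N w.
have shift_ab : shifted N (parity a) (parity b) by move=> i lt_i1N; rewrite par_a.
exists a; split=> //.
by rewrite Mk_recl -(Mk_shift shift_ab) ?par_a /w ?addbK //; lia.
Qed.

Variables x y : nat.
Local Notation X := (Mk k.+1 (parity x)).
Local Notation Y := (Mk k.+1 (parity y)).

Lemma class_arrow_shift a b : inClass n k.+1 x a -> inClass n k.+1 y b ->
  arrow (2 ^ N) a b -> shifted n X Y.
Proof.
move=> /inClassE [_ cls_a] /inClassE [_ cls_b] /arrowN [_ _ shift_ab] i lt_i1n.
by rewrite -cls_b 1?(Mk_shift shift_ab) ?cls_a //; lia.
Qed.

Lemma class_arrow_fwd : shifted n X Y -> forall a, inClass n k.+1 x a ->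
  exists! b, inClass n k.+1 y b /\ arrow (2 ^ N) a b.
Proof.
move=> shift_XY a /inClassE [lt_a cls_a].
have [b [lt_b shift_ab last_b]] := shift_exists_fwd a (Y n.-1).
have cls_b : inClass n k.+1 y b.
  apply/inClassE; split=> // i lt_in; have [lt_i1n | ge_i1n] := ltnP i.+1 n.
    by rewrite (Mk_shift shift_ab) ?cls_a -?shift_XY //; lia.
  by have -> : i = n.-1 by lia.
exists b; split; first by split=> //; apply/arrowN.
move=> b' [/inClassE [lt_b' cls_b'] /arrowN [_ _ shift_ab']].
by apply: (shift_unique_fwd lt_b lt_b' shift_ab shift_ab'); rewrite last_b cls_b' //; lia.
Qed.

Lemma class_arrow_bwd : shifted n X Y -> forall b, inClass n k.+1 y b ->
  exists! a, inClass n k.+1 x a /\ arrow (2 ^ N) a b.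
Proof.
move=> shift_XY b /inClassE [lt_b cls_b].
have [a [lt_a shift_ab first_a]] := shift_exists_bwd b (X 0).
have cls_a : inClass n k.+1 x a.
  apply/inClassE; split=> // -[// | i] lt_in.
  by rewrite -(Mk_shift shift_ab) ?cls_b ?shift_XY //; lia.
exists a; split; first by split=> //; apply/arrowN.
move=> a' [/inClassE [lt_a' cls_a'] /arrowN [_ _ shift_a'b]].
by apply: (shift_unique_bwd lt_a lt_a' shift_ab shift_a'b); rewrite first_a cls_a'.
Qed.

End WindowShifts.

Theorem mainTheorem19 (n k x y : nat) (hn : 1 <= n) (hk : 1 <= k)
    (hx : x < 2 ^ (n + k - 1)) (hy : y < 2 ^ (n + k - 1)) :
  (arrow (2 ^ n) (HMbar n k x) (HMbar n k y) <->
     exists a b, [/\ inClass n k x a, inClass n k y b & arrow (2 ^ (n + k - 1)) a b])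
  /\
  (arrow (2 ^ n) (HMbar n k x) (HMbar n k y) ->
     (forall a, inClass n k x a ->
        exists! b, inClass n k y b /\ arrow (2 ^ (n + k - 1)) a b) /\
     (forall b, inClass n k y b ->
        exists! a, inClass n k x a /\ arrow (2 ^ (n + k - 1)) a b)).
Proof.
case: k hk hx hy => // k _; rewrite addnS subn1 /= => hx hy.
rewrite arrow_HMbar //; split; last first.
  by move=> shift_xy; split; [exact: (@class_arrow_fwd _ _ hn) | exact: (@class_arrow_bwd _ _ hn)].
split=> [shift_xy | [a [b [cls_a cls_b arrow_ab]]]]; last exact: (@class_arrow_shift _ _ hn _ _ a b).
have cls_x : inClass n k.+1 x x by apply/inClassE.
have [b [[cls_b arrow_xb] _]] := @class_arrow_fwd _ _ hn _ _ shift_xy x cls_x.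
by exists x, b.
Qed.
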